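(* Let $A=[a_{ij}],B=[b_{ij}]\in\mathbb{R}_+^{m\times n}$ be a WN-pair such that $a_{ij}>0$ whenever $b_{ij}=0$. Then the pair $(A,B)$ is $S$-irreducible.
   Context: $[m]=\{1,\dots,m\}$. For $F\in\mathbb{R}^{m\times n}$, $R\subseteq[m]$, $K\subseteq[n]$, $F[R,K]$ is the submatrix with rows in $R$ and columns in $K$. A pair $A,B\in\mathbb{R}_+^{m\times n}$ is a WN-pair if $n\ge m$, $B$ has no zero row, and each column of $B$ has exactly one positive entry. A square nonnegative matrix is monomial if each row and each column has exactly one positive entry; it is irreducible if the digraph with an edge $i\to j$ iff the $(i,j)$ entry is positive is strongly connected. A WN-pair is $S$-irreducible if for every $K\subseteq[n]$ with $|K|=m$ such that $B[[m],K]$ is monomial, the matrix $B[[m],K]^{-1}A[[m],K]$ is irreducible. *)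

From HB Require Import structures.
From mathcomp Require Import all_boot all_order all_algebra.
Set Implicit Arguments. Unset Strict Implicit. Unset Printing Implicit Defensive.
Import Order.TTheory GRing.Theory Num.Theory.
Local Open Scope ring_scope.

Definition nonneg_mx (R : realFieldType) m n (A : 'M[R]_(m, n)) : Prop :=
  forall i j, 0 <= A i j.

Definition WN_pair (R : realFieldType) m n (A B : 'M[R]_(m, n)) : Prop :=
  [/\ (m <= n)%N, nonneg_mx A, nonneg_mx B,
      (forall i, exists j, B i j != 0) &
      (forall j, exists! i, 0 < B i j)].

Definition monomial_mx (R : realFieldType) m (M : 'M[R]_m) : Prop :=
  nonneg_mx M /\
  (forall i, exists! j, 0 < M i j) /\ (forall j, exists! i, 0 < M i j).

Definition irreducible_mx (R : realFieldType) m (M : 'M[R]_m) : Prop :=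
  forall i j : 'I_m, connect (fun k l => 0 < M k l) i j.

(* S-irreducible: for every m-subset K of columns (enumerated injectively by f,
   the order being irrelevant) with B[[m],K] monomial, B[[m],K]^-1 A[[m],K]
   is irreducible. *)
Definition S_irreducible (R : realFieldType) m n (A B : 'M[R]_(m, n)) : Prop :=
  forall f : 'I_m -> 'I_n, injective f ->
    monomial_mx (colsub f B) ->
    irreducible_mx (invmx (colsub f B) *m colsub f A).

From HB Require Import structures.
From mathcomp Require Import all_boot all_order all_algebra.
Import Order.TTheory GRing.Theory Num.Theory.
Local Open Scope ring_scope.

(* The inverse of a monomial matrix M is its transpose with each positive entry
   inverted.  Hence row k of invmx M *m A is row i of A scaled by (M i k)^-1,
   where i is the row of the unique positive entry in column k; for k != j that
   entry M i j is zero, so the hypothesis on A makes (invmx M *m A) k j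
   positive.  A matrix with positive off-diagonal entries is irreducible. *)

Lemma irreducible_mx_offdiag (R : realFieldType) m (M : 'M[R]_m) :
  (forall k j, k != j -> 0 < M k j) -> irreducible_mx M.
Proof.
move=> Moff k j; have [-> | neq_kj] := eqVneq k j; first exact: connect0.
exact/connect1/Moff.
Qed.

Section MonomialInverse.

Variables (R : realFieldType) (m : nat) (M : 'M[R]_m).
Hypothesis Mmono : monomial_mx M.

Definition monomial_inv : 'M[R]_m :=
  \matrix_(k, i) (if 0 < M i k then (M i k)^-1 else 0).

Lemma monomial_mx_eq0 i j : ~~ (0 < M i j) -> M i j = 0.
Proof.
have [Mge0 _] := Mmono.
by move=> Mij_ngt0; apply/eqP; rewrite eq_le Mge0 andbT leNgt.
Qed.

Lemma monomial_mx_row_uniq {i k l} : 0 < M i k -> 0 < M i l -> k = l.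
Proof.
have [_ [rowu _]] := Mmono; have [x [_ ux]] := rowu i.
by move=> /ux <- /ux.
Qed.

Lemma monomial_mx_col_uniq {i i' k} : 0 < M i k -> 0 < M i' k -> i = i'.
Proof.
have [_ [_ colu]] := Mmono; have [x [_ ux]] := colu k.
by move=> /ux <- /ux.
Qed.

Lemma monomial_inv_mulmxE {n} (X : 'M[R]_(m, n)) {i k} j :
  0 < M i k -> (monomial_inv *m X) k j = (M i k)^-1 * X i j.
Proof.
move=> Mik_gt0; rewrite mxE (bigD1 i) //= big1 ?addr0 => [|i' neq_i'i].
  by rewrite mxE Mik_gt0.
rewrite mxE; case: ifP => [Mi'k_gt0 | _]; last by rewrite mul0r.
by rewrite (monomial_mx_col_uniq Mi'k_gt0 Mik_gt0) eqxx in neq_i'i.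
Qed.

Lemma monomial_col_gt0 k : exists i, 0 < M i k.
Proof. by have [_ [_ colu]] := Mmono; have [i [Mik_gt0 _]] := colu k; exists i. Qed.

Lemma mulmx_monomial_inv : monomial_inv *m M = 1%:M.
Proof.
apply/matrixP => k l; have [i Mik_gt0] := monomial_col_gt0 k.
rewrite (monomial_inv_mulmxE _ _ Mik_gt0) mxE.
have [<- | neq_kl] := eqVneq k l; first by rewrite mulVf ?gt_eqF.
rewrite (monomial_mx_eq0 i l) ?mulr0 //; apply/negP => Mil_gt0.
by rewrite (monomial_mx_row_uniq Mik_gt0 Mil_gt0) eqxx in neq_kl.
Qed.

Lemma invmx_monomial : invmx M = monomial_inv.
Proof.
have [_ Munit] := mulmx1_unit mulmx_monomial_inv.
by rewrite -(mulmxK Munit monomial_inv) mulmx_monomial_inv mul1mx.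
Qed.

Lemma invmx_monomial_mulmx_offdiag_gt0 (A : 'M[R]_m) :
  (forall i j, M i j = 0 -> 0 < A i j) ->
  forall k j, k != j -> 0 < (invmx M *m A) k j.
Proof.
move=> Apos k j neq_kj; have [i Mik_gt0] := monomial_col_gt0 k.
rewrite invmx_monomial (monomial_inv_mulmxE _ _ Mik_gt0).
rewrite mulr_gt0 ?invr_gt0 // Apos // monomial_mx_eq0 //; apply/negP => Mij_gt0.
by rewrite (monomial_mx_row_uniq Mik_gt0 Mij_gt0) eqxx in neq_kj.
Qed.

End MonomialInverse.

Theorem proposition6p4 (R : realFieldType) (m n : nat) (A B : 'M[R]_(m, n)) :
  WN_pair A B ->
  (forall i j, B i j = 0 -> 0 < A i j) ->
  S_irreducible A B.
Proof.
move=> _ Apos f _ Bf_mono; apply: irreducible_mx_offdiag.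
by apply: invmx_monomial_mulmx_offdiag_gt0 => // i j; rewrite !mxE; apply: Apos.
Qed.
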